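(* Consider two instances of the baseline diffusion model that differ only in the new product's specification: $((v_{Hi})_{i=1}^N,s_p)$ in the first and $((v'_{Hi})_{i=1}^N,s'_p)$ in the second. Suppose $v'_{Hi}\ge v_{Hi}$ for all $i$ and $s'_p\ge s_p$. Let $D_n^t$ and $D_n'^t$ be the corresponding sets of new-product consumers. Then $D_n^t\subseteq D_n'^t$ for all $t\ge1$; equivalently, the thresholds of Proposition 1 satisfy $\underline H_t\ge\underline H'_t$ for all $t\ge2$.
   Context: Baseline diffusion model. There are $N\ge 2$ individuals $i\in\{1,\dots,N\}$ and two products, an incumbent $p_c$ and a new product $p_n$. The individuals are partitioned into $G\ge 2$ nonempty groups $N_1,\dots,N_G$. Every member of group $N_k$ has the same aspiration level $H_{N_k}$, and $H_{N_1}>\cdots>H_{N_G}$; write $H_i$ for individual $i$'s aspiration level. Consuming $p_c$ gives every individual the payoff $v_L$, where $H_{N_2}<v_L<H_{N_1}$. Consuming $p_n$ gives individual $i$ the payoff $v_{Hi}\ge H_{N_1}$. Product similarities are $s_{p_c,p_c}=s_{p_n,p_n}=1$, $s_{p_n,p_c}=s_p\in(0,1)$ and $s_{p_c,p_n}=0$. Individual similarities are $s_{i,i}=1$ and $s_{i,j}=s\in(0,1]$ for $i\ne j$. Dynamics. In period $0$ everyone consumes $p_c$ ($D_c^0=\{1,\dots,N\}$, $D_n^0=\emptyset$). For $t\ge1$, $U_i^t(p_c)=\sum_{t'=0}^{t-1}\sum_{j\in D_c^{t'}}s_{i,j}(v_L-H_i)$ and $U_i^t(p_n)=s_pU_i^t(p_c)+\sum_{t'=0}^{t-1}\sum_{j\in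 D_n^{t'}}s_{i,j}(v_{Hj}-H_i)$. Individual $i\in D_n^t$ iff $U_i^t(p_n)>U_i^t(p_c)$; otherwise $i\in D_c^t$. By Proposition 1, in every period $t$ the set $D_n^t$ equals $\{i:H_i>\underline H_t\}$ for some threshold $\underline H_t\in\mathbb R\cup\{-\infty\}$. *)

From HB Require Import structures.
From mathcomp Require Import all_boot all_order all_algebra.
Set Implicit Arguments. Unset Strict Implicit. Unset Printing Implicit Defensive.
Import Order.TTheory GRing.Theory Num.Theory.
Local Open Scope ring_scope.

(* Baseline diffusion model. Individuals are 'I_N; aspiration H i.
   In every period each individual consumes exactly one product, so
   D_c^t is the complement of D_n^t. *)

Definition sim {R : numDomainType} {N : nat} (s : R) (i j : 'I_N) : R :=
  if i == j then 1 else s.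

(* U_i^t(p_c), given the history [D_n^0; ...; D_n^{t-1}] *)
Definition Uc {R : numDomainType} {N : nat} (H : 'I_N -> R) (vL s : R)
  (hist : seq {set 'I_N}) (i : 'I_N) : R :=
  \sum_(D <- hist) \sum_(j in ~: D) sim s i j * (vL - H i).

(* U_i^t(p_n), given the history [D_n^0; ...; D_n^{t-1}] *)
Definition Un {R : numDomainType} {N : nat} (H : 'I_N -> R) (vL s sp : R)
  (vH : 'I_N -> R) (hist : seq {set 'I_N}) (i : 'I_N) : R :=
  sp * Uc H vL s hist i +
  \sum_(D <- hist) \sum_(j in D) sim s i j * (vH j - H i).

Definition next_Dn {R : numDomainType} {N : nat} (H : 'I_N -> R) (vL s sp : R)
  (vH : 'I_N -> R) (hist : seq {set 'I_N}) : {set 'I_N} :=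
  [set i | Uc H vL s hist i < Un H vL s sp vH hist i].

(* history [D_n^0; ...; D_n^t], with D_n^0 = set0 *)
Fixpoint history {R : numDomainType} {N : nat} (H : 'I_N -> R) (vL s sp : R)
  (vH : 'I_N -> R) (t : nat) : seq {set 'I_N} :=
  match t with
  | 0 => [:: set0]
  | t'.+1 => let h := history H vL s sp vH t' in rcons h (next_Dn H vL s sp vH h)
  end.

Definition Dn {R : numDomainType} {N : nat} (H : 'I_N -> R) (vL s sp : R)
  (vH : 'I_N -> R) (t : nat) : {set 'I_N} :=
  last set0 (history H vL s sp vH t).

From HB Require Import structures.
From mathcomp Require Import all_boot all_order all_algebra.
From mathcomp Require Import ring.
Set Implicit Arguments. Unset Strict Implicit. Unset Printing Implicit Defensive.
Import Order.TTheory GRing.Theory Num.Theory.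
Local Open Scope ring_scope.

(* The advantage U_i(p_n) - U_i(p_c) is a sum over past periods of a gain that
   depends on the set D of new-product consumers of that period; a consumer j
   contributes s_ij (v_Hj - H_i) if j is in D and s_ij (s_p - 1)(v_L - H_i)
   otherwise.  For an individual with H_i <= v_L the second term is <= 0 <= the
   first, so the gain grows with D, s_p and v_H, and by induction on t the
   histories of the two models stay ordered.  An individual with H_i > v_L has
   every term >= 0, and the term of period 0 (everyone on p_c) is > 0, so she
   adopts p_n from period 1 on in both models. *)

Section PeriodGain.
Variables (R : realFieldType) (N : nat) (h : 'I_N -> R) (vL s : R).

Definition period_gain (sp : R) (vH : 'I_N -> R) (D : {set 'I_N}) (i : 'I_N) : R :=
  \sum_j sim s i j * (if j \in D then vH j - h i else (sp - 1) * (vL - h i)).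

Lemma Un_sub_Uc sp vH hist i :
  Un h vL s sp vH hist i - Uc h vL s hist i =
  \sum_(D <- hist) period_gain sp vH D i.
Proof.
rewrite /Un /Uc.
have -> : forall a b : R, sp * a + b - a = (sp - 1) * a + b by move=> a b; ring.
rewrite (@mulr_sumr R _ hist predT) -big_split /=; apply: eq_bigr => D _.
rewrite /period_gain [RHS](bigID (fun j => j \in D)) /= addrC (@mulr_sumr R); congr (_ + _).
  by apply: eq_bigr => j ->.
rewrite [RHS](eq_bigl (fun j : 'I_N => j \in ~: D)); last by move=> j; rewrite inE.
by apply: eq_bigr => j; rewrite inE => /negbTE ->; rewrite mulrCA.
Qed.

Hypothesis s_gt0 : 0 < s.

Lemma sim_ge0 (i j : 'I_N) : 0 <= sim s i j.
Proof. by rewrite /sim; case: eqP => _; [exact: ler01 | exact: ltW]. Qed.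

Lemma period_gain_le sp sp' vH vH' (D D' : {set 'I_N}) i :
  sp <= sp' -> sp' <= 1 -> h i <= vL -> (forall j, vH j <= vH' j) ->
  (forall j, h i <= vH j) -> D \subset D' ->
  period_gain sp vH D i <= period_gain sp' vH' D' i.
Proof.
move=> le_sp sp'_le1 hi_le_vL le_vH hi_le_vH /subsetP sDD'.
apply: ler_sum => j _; apply: ler_wpM2l; first exact: sim_ge0.
case: ifP => jD; first by rewrite (sDD' _ jD) lerD2r.
case: ifP => jD'; last by rewrite ler_wpM2r ?subr_ge0 // lerD2r.
apply: (@le_trans _ _ 0).
  by rewrite mulr_le0_ge0 ?subr_ge0 // subr_le0 (le_trans le_sp).
by rewrite subr_ge0 (le_trans (hi_le_vH j)).
Qed.

Lemma period_gain_ge0 sp vH (D : {set 'I_N}) i :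
  sp < 1 -> vL < h i -> (forall j, h i <= vH j) -> 0 <= period_gain sp vH D i.
Proof.
move=> sp_lt1 vL_lt_hi hi_le_vH; apply: sumr_ge0 => j _.
apply: mulr_ge0; first exact: sim_ge0.
by case: ifP => _; rewrite ?subr_ge0 // mulr_le0 // ?subr_le0 ?ltW.
Qed.

Lemma period_gain_set0_gt0 sp vH i :
  sp < 1 -> vL < h i -> (forall j, h i <= vH j) -> 0 < period_gain sp vH set0 i.
Proof.
move=> sp_lt1 vL_lt_hi hi_le_vH; rewrite /period_gain (bigD1 i) //= ltr_wpDr //.
  apply: sumr_ge0 => j _; apply: mulr_ge0; first exact: sim_ge0.
  by rewrite inE mulr_le0 // ?subr_le0 ?ltW.
by rewrite /sim eqxx mul1r inE -mulrNN mulr_gt0 // oppr_gt0 subr_lt0.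
Qed.

End PeriodGain.

Lemma all2_rcons (T : Type) (r : T -> T -> bool) s s' x y :
  all2 r s s' -> r x y -> all2 r (rcons s x) (rcons s' y).
Proof.
elim: s s' => [|a s IH] [|b s'] //= => [_ -> //|/andP[-> rss'] rxy].
exact: IH.
Qed.

Lemma all2_last (T : Type) (r : T -> T -> bool) s s' x y :
  all2 r s s' -> r x y -> r (last x s) (last y s').
Proof.
by elim: s s' x y => [|a s IH] [|b s'] //= x y /andP[rab rss'] _; apply: IH.
Qed.

Lemma history_head (R : numDomainType) N (H : 'I_N -> R) vL s sp vH t :
  exists r, history H vL s sp vH t = set0 :: r.
Proof.
elim: t => [|t [r IH]] /=; first by exists [::].
by rewrite IH; exists (rcons r (next_Dn H vL s sp vH (set0 :: r))).
Qed.

Section Comparison.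
Variables (R : realFieldType) (N : nat) (h : 'I_N -> R) (vL s sp sp' : R).
Variables vH vH' : 'I_N -> R.
Hypotheses (s_gt0 : 0 < s) (le_sp : sp <= sp') (sp'_lt1 : sp' < 1).
Hypothesis le_vH : forall j, vH j <= vH' j.
Hypotheses (h_le_vH : forall i j, h i <= vH j) (h_le_vH' : forall i j, h i <= vH' j).

Local Notation subset_rel := (fun D D' : {set 'I_N} => D \subset D').

Lemma sum_period_gain_le i (hist hist' : seq {set 'I_N}) :
  h i <= vL -> all2 subset_rel hist hist' ->
  \sum_(D <- hist) period_gain h vL s sp vH D i <=
  \sum_(D <- hist') period_gain h vL s sp' vH' D i.
Proof.
move=> hi_le_vL; elim: hist hist' => [|D hist IH] [|D' hist'] //=.
  by rewrite !big_nil.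
move=> /andP[sDD' all_hist]; rewrite !big_cons lerD ?IH //.
by apply: period_gain_le => //; apply: ltW.
Qed.

Lemma mem_next_Dn_high i hist :
  vL < h i -> (exists r, hist = set0 :: r) -> i \in next_Dn h vL s sp' vH' hist.
Proof.
move=> vL_lt_hi [r ->]; rewrite inE -subr_gt0 Un_sub_Uc big_cons.
rewrite ltr_wpDr ?period_gain_set0_gt0 //.
by apply: sumr_ge0 => D _; apply: period_gain_ge0.
Qed.

Lemma next_Dn_subset hist hist' :
  all2 subset_rel hist hist' -> (exists r, hist' = set0 :: r) ->
  next_Dn h vL s sp vH hist \subset next_Dn h vL s sp' vH' hist'.
Proof.
move=> all_hist head_hist'; apply/subsetP => i.
have [hi_le_vL|vL_lt_hi] := lerP (h i) vL; last by move=> _; apply: mem_next_Dn_high.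
rewrite !inE -subr_gt0 Un_sub_Uc => gain_gt0.
rewrite -subr_gt0 Un_sub_Uc (lt_le_trans gain_gt0) //.
exact: sum_period_gain_le.
Qed.

Lemma history_subset t :
  all2 subset_rel (history h vL s sp vH t) (history h vL s sp' vH' t).
Proof.
elim: t => [|t IH] /=; first by rewrite sub0set.
by apply: all2_rcons => //; apply: next_Dn_subset => //; apply: history_head.
Qed.

End Comparison.

Theorem lemma2 (R : realFieldType) (N G : nat) (hN : (2 <= N)%N) (hG2 : (2 <= G)%N)
  (grp : 'I_N -> 'I_G) (grp_surj : forall k : 'I_G, exists i : 'I_N, grp i = k)
  (hG : 'I_G -> R) (hG_decr : forall k l : 'I_G, (k < l)%N -> hG l < hG k)
  (vL s sp sp' : R) (vH vH' : 'I_N -> R)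
  (hvL1 : forall k : 'I_G, val k = 0%N -> vL < hG k)
  (hvL2 : forall k : 'I_G, val k = 1%N -> hG k < vL)
  (hvH : forall (k : 'I_G) (i : 'I_N), val k = 0%N -> hG k <= vH i)
  (hvH' : forall (k : 'I_G) (i : 'I_N), val k = 0%N -> hG k <= vH' i)
  (hsp : 0 < sp < 1) (hsp' : 0 < sp' < 1) (hs : 0 < s <= 1)
  (hvHle : forall i : 'I_N, vH i <= vH' i) (hsple : sp <= sp') :
  forall t : nat, (1 <= t)%N ->
    Dn (fun i => hG (grp i)) vL s sp vH t \subset
    Dn (fun i => hG (grp i)) vL s sp' vH' t.
Proof.
move=> t _.
pose k0 : 'I_G := Ordinal (ltnW hG2).
have hG_le_top i : hG (grp i) <= hG k0.
  have [grp_i0|grp_i_gt0] := posnP (grp i); last exact/ltW/hG_decr.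
  by rewrite (_ : grp i = k0) //; apply: val_inj.
have h_le_vH i j : hG (grp i) <= vH j by rewrite (le_trans (hG_le_top i)) ?hvH.
have h_le_vH' i j : hG (grp i) <= vH' j by rewrite (le_trans (hG_le_top i)) ?hvH'.
case/andP: hs => s_gt0 _; case/andP: hsp' => _ sp'_lt1.
exact: all2_last (history_subset _ _ _ _ _ _ _ t) (sub0set _).
Qed.
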